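(* Write $\dfrac{(q;q)_\infty^2}{(q^2;q^2)_\infty(q^3;q^3)_\infty^2}=\sum_{n\ge0}a_nq^n$. Then for all $n\ge0$: $a_n>0$ if $n\equiv0\pmod3$, $a_n<0$ if $n\equiv1\pmod3$, and $a_n=0$ if $n\equiv2\pmod3$.
   Context: For $|q|<1$, $(a;q)_\infty=\prod_{k\ge0}(1-aq^k)$. *)

(* Formal power series in q over int, represented via
   truncations: the coefficient of q^n of the formal product is read off a
   finite polynomial truncation that agrees with it up to degree n. *)
From HB Require Import structures.
From mathcomp Require Import all_boot all_order all_algebra.
Set Implicit Arguments. Unset Strict Implicit. Unset Printing Implicit Defensive.
Import Order.TTheory GRing.Theory Num.Theory.
Local Open Scope ring_scope.

(* truncated geometric series 1/(1 - q^k) = sum_{j>=0} q^(k j), terms j <= N *)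
Definition geomP (k N : nat) : {poly int} := \sum_(j < N.+1) 'X^(k * j).

(* Truncation of (q;q)_oo^2 / ((q^2;q^2)_oo (q^3;q^3)_oo^2):
   (q^m;q^m)_oo = prod_{k>=1} (1 - q^(m k)); factors k > N and geometric
   terms j > N only affect degrees > N. *)
Definition trunc_prod (N : nat) : {poly int} :=
  \prod_(1 <= k < N.+1)
     ((1 - 'X^k) ^+ 2 * geomP (2 * k) N * (geomP (3 * k) N) ^+ 2).

Definition a (n : nat) : int := (trunc_prod n)`_n.

(* By the Jacobi triple product, (q;q)^2/(q^2;q^2) = (q;q^2)^2 (q^2;q^2) = sum_j (-1)^j q^(j^2).
   Sorting j by its residue mod 3 gives the 3-dissection
     sum_j (-1)^j q^(j^2) = sum_j (-1)^j q^(9 j^2) - 2 q sum_j (-1)^j q^(9 j^2 - 6 j),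
   and the triple product turns each part, divided by (q^3;q^3)^2, back into a product:
     sum_j (-1)^j q^(9 j^2) / (q^3;q^3)^2 = 1 / ((q^3;q^9)^2 (q^6;q^9)^2 (q^18;q^18)),
     sum_j (-1)^j q^(9 j^2 - 6 j) / (q^3;q^3)^2 = 1 / ((q^3;q^3) (q^6;q^18) (q^9;q^18) (q^12;q^18)).
   Both are series in q^3 whose coefficients dominate those of 1/(1 - q^3), so every coefficient
   of q^(3k) is positive: a_(3k) is such a coefficient of the first series, a_(3k+1) is -2 times
   one of the second, and a_(3k+2) = 0.
   Every identity is proved for polynomial truncations, modulo q^(N+1); the finite triple
   product comes from Rothe's q-binomial theorem. *)

From HB Require Import structures.
From mathcomp Require Import all_boot all_order all_algebra.
From mathcomp Require Import zify ring.
From Stdlib Require Import Setoid Morphisms.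
Set Implicit Arguments. Unset Strict Implicit. Unset Printing Implicit Defensive.
Import Order.TTheory GRing.Theory Num.Theory.
Local Open Scope ring_scope.

Definition eq_upto (R : nzRingType) (N : nat) (p q : {poly R}) :=
  forall i, (i <= N)%N -> p`_i = q`_i.

Section EqUptoRelation.
Variables (R : nzRingType) (N : nat).

Lemma eq_upto_refl : Reflexive (@eq_upto R N). Proof. by move=> p i. Qed.
Lemma eq_upto_sym : Symmetric (@eq_upto R N).
Proof. by move=> p q pq i Hi; rewrite pq. Qed.
Lemma eq_upto_trans : Transitive (@eq_upto R N).
Proof. by move=> p q r pq qr i Hi; rewrite pq ?qr. Qed.

End EqUptoRelation.

Add Parametric Relation (R : nzRingType) N : {poly R} (@eq_upto R N)
  reflexivity proved by (@eq_upto_refl R N)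
  symmetry proved by (@eq_upto_sym R N)
  transitivity proved by (@eq_upto_trans R N) as eq_upto_rel.

Add Parametric Morphism (R : nzRingType) N : (@GRing.add {poly R})
  with signature @eq_upto R N ==> @eq_upto R N ==> @eq_upto R N as eq_upto_add.
Proof. by move=> p p' pp' q q' qq' i Hi; rewrite !coefD pp' ?qq'. Qed.

Add Parametric Morphism (R : nzRingType) N : (@GRing.opp {poly R})
  with signature @eq_upto R N ==> @eq_upto R N as eq_upto_opp.
Proof. by move=> p p' pp' i Hi; rewrite !coefN pp'. Qed.

Add Parametric Morphism (R : nzRingType) N : (@GRing.mul {poly R})
  with signature @eq_upto R N ==> @eq_upto R N ==> @eq_upto R N as eq_upto_mul.
Proof.
move=> p p' pp' q q' qq' i Hi; rewrite !coefM; apply: eq_bigr => j _.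
have jN : (j <= N)%N by apply: leq_trans Hi; rewrite -ltnS.
by rewrite pp' // qq' // (leq_trans (leq_subr _ _) Hi).
Qed.

Add Parametric Morphism (R : nzRingType) N : (@GRing.exp {poly R})
  with signature @eq_upto R N ==> eq ==> @eq_upto R N as eq_upto_exp.
Proof.
move=> p p' pp'; elim=> [|k IHk]; first by reflexivity.
by rewrite !exprS; apply: eq_upto_mul_Proper.
Qed.

Section EqUpto.
Variables (R : nzRingType) (N : nat).
Implicit Types p q : {poly R}.

Lemma eq_upto_prod1 (I : Type) (r : seq I) (P : pred I) (F : I -> {poly R}) :
  (forall i, P i -> eq_upto N (F i) 1) -> eq_upto N (\prod_(i <- r | P i) F i) 1.
Proof.
move=> F1; apply: (big_ind (fun x => eq_upto N x 1)) => // x y -> ->.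
by rewrite mulr1; reflexivity.
Qed.

Lemma eq_upto_sum (I : Type) (r : seq I) (P : pred I) (F G : I -> {poly R}) :
  (forall i, P i -> eq_upto N (F i) (G i)) ->
  eq_upto N (\sum_(i <- r | P i) F i) (\sum_(i <- r | P i) G i).
Proof.
by move=> FG; apply: big_ind2 => // x1 x2 y1 y2 -> ->; reflexivity.
Qed.

Lemma eq_upto_XnM k p : (N < k)%N -> eq_upto N ('X^k * p) 0.
Proof. by move=> Nk i iN; rewrite coefXnM coef0 (leq_ltn_trans iN Nk). Qed.

Lemma eq_upto_subXn k : (N < k)%N -> eq_upto N (1 - 'X^k : {poly R}) 1.
Proof.
move=> Nk; rewrite -[X in 1 - X]mulr1 (eq_upto_XnM 1 Nk) subr0; reflexivity.
Qed.

Lemma eq_upto_XnM1 d p : ((d <= N)%N -> eq_upto N p 1) -> eq_upto N ('X^d * p) 'X^d.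
Proof.
move=> p1; have [dN | Nd] := leqP d N; first by rewrite (p1 dN) mulr1; reflexivity.
by rewrite (eq_upto_XnM p Nd) -[X in eq_upto _ _ X]mulr1 (eq_upto_XnM 1 Nd); reflexivity.
Qed.

End EqUpto.

Lemma eq_upto_cancel (R : comNzRingType) N (u p q : {poly R}) :
  eq_upto N (u * p) 1 -> eq_upto N (u * q) 1 -> eq_upto N p q.
Proof.
move=> up uq; transitivity (p * (u * q)); first by rewrite uq mulr1; reflexivity.
by rewrite mulrA (mulrC p) up mul1r; reflexivity.
Qed.

Lemma eq_upto_eq (R : nzRingType) N (p q : {poly R}) : p = q -> eq_upto N p q.
Proof. by move=> ->; reflexivity. Qed.

Definition qpoch (R : nzRingType) (a d L : nat) : {poly R} :=
  \prod_(k < L) (1 - 'X^(a + d * k)).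
Arguments qpoch {R} a d L.

Section QPoch.
Context {R : comNzRingType}.
Local Notation qpoch := (@qpoch R).

Lemma qpoch_trunc N a d L L' : (0 < a)%N -> (0 < d)%N -> (N <= L)%N -> (N <= L')%N ->
  eq_upto N (qpoch a d L) (qpoch a d L').
Proof.
have ext r L0 : (0 < a)%N -> (0 < d)%N -> (N <= L0)%N ->
    eq_upto N (qpoch a d (L0 + r)) (qpoch a d L0).
  move=> a0 d0 NL0; rewrite /qpoch big_split_ord -[X in eq_upto _ _ X]mulr1.
  apply: eq_upto_mul_Proper; first by reflexivity.
  by apply: eq_upto_prod1 => k _; apply: eq_upto_subXn => /=; have := leq_pmull (L0 + k) d0; lia.
move=> a0 d0 NL NL'; have [LL'|L'L] := leqP L L'.
  by rewrite -(subnKC LL'); symmetry; apply: ext.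
by rewrite -(subnKC (ltnW L'L)); apply: ext.
Qed.

Lemma qpoch_split2 a d L : qpoch a (2 * d) L * qpoch (a + d) (2 * d) L = qpoch a d (2 * L).
Proof.
elim: L => [|L IHL]; first by rewrite /qpoch muln0 !big_ord0 mulr1.
rewrite /qpoch in IHL *; rewrite mulnS !big_ord_recr /= -IHL.
have -> : (a + d * (2 * L).+1 = a + d + 2 * d * L)%N by ring.
have -> : (a + d * (2 * L) = a + 2 * d * L)%N by ring.
ring.
Qed.

Lemma qpoch_split3 a d L :
  qpoch a (3 * d) L * qpoch (a + d) (3 * d) L * qpoch (a + 2 * d) (3 * d) L = qpoch a d (3 * L).
Proof.
elim: L => [|L IHL]; first by rewrite /qpoch muln0 !big_ord0 !mulr1.
rewrite /qpoch in IHL *; rewrite mulnS !big_ord_recr /= -IHL.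
have -> : (a + d * (3 * L).+2 = a + 2 * d + 3 * d * L)%N by ring.
have -> : (a + d * (3 * L).+1 = a + d + 3 * d * L)%N by ring.
have -> : (a + d * (3 * L) = a + 3 * d * L)%N by ring.
ring.
Qed.

Lemma geom_telescope e M :
  (1 - 'X^e) * (\sum_(j < M.+1) 'X^(e * j)) = 1 - 'X^(e * M.+1) :> {poly R}.
Proof.
elim: M => [|M IHM]; first by rewrite big_ord1 muln0 muln1 expr0 mulr1.
by rewrite big_ord_recr /= mulrDr IHM (mulnS e M.+1) exprD; ring.
Qed.

End QPoch.

Lemma geomPK N e : (0 < e)%N -> eq_upto N ((1 - 'X^e) * geomP e N) 1.
Proof. by move=> e0; rewrite /geomP geom_telescope; apply: eq_upto_subXn; nia. Qed.

Definition qpochV (N a d L : nat) : {poly int} := \prod_(k < L) geomP (a + d * k) N.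

Lemma qpochVK N a d L : (0 < a)%N -> eq_upto N (qpoch a d L * qpochV N a d L) 1.
Proof.
move=> a0; rewrite /qpoch /qpochV -big_split /=.
by apply: eq_upto_prod1 => k _; apply: geomPK; rewrite addn_gt0 a0.
Qed.

Lemma qpochV_recl N a d L : qpochV N a d L.+1 = geomP a N * qpochV N (a + d) d L.
Proof.
rewrite /qpochV big_ord_recl /= muln0 addn0; congr (_ * _).
by apply: eq_bigr => k _; rewrite /bump /= add1n mulnS addnA.
Qed.

Fixpoint tri (i : nat) : nat := if i is i'.+1 then (tri i' + i')%N else 0%N.

Lemma triE i : (2 * tri i = i * i.-1)%N.
Proof. by elim: i => // -[|i] //= IHi; nia. Qed.

Section QBinomial.
Variable R : comNzRingType.
Implicit Types p u v : R.

Fixpoint qbinom p (m i : nat) : R :=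
  match m, i with
  | _, 0 => 1
  | 0, _.+1 => 0
  | m'.+1, i'.+1 => qbinom p m' i' + p ^+ i'.+1 * qbinom p m' i'.+1
  end.

Lemma qbinom0 p m : qbinom p m 0 = 1. Proof. by case: m. Qed.

Lemma qbinom_small p m i : (m < i)%N -> qbinom p m i = 0.
Proof. by elim: m i => [|m IHm] [|i] //= mi; rewrite !IHm ?mulr0 ?addr0 // ltnW. Qed.

Lemma qbinom_rothe p m u v :
  \prod_(k < m) (u + v * p ^+ k) =
  \sum_(i < m.+1) p ^+ tri i * qbinom p m i * v ^+ i * u ^+ (m - i).
Proof.
elim: m v => [|m IHm] v; first by rewrite big_ord0 big_ord1 /= !expr0 !mulr1.
rewrite big_ord_recl /= expr0 mulr1.
under eq_bigr => i _ do rewrite /bump /= add1n exprS mulrA.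
rewrite IHm mulrDl [in RHS]big_ord_recl /= !expr0 !mulr1 subn0.
rewrite [in RHS](eq_bigr (fun i : 'I_m.+1 =>
   p ^+ tri i * p ^+ i * qbinom p m i * v ^+ i.+1 * u ^+ (m - i) +
   p ^+ tri i * p ^+ i * p ^+ i.+1 * qbinom p m i.+1 * v ^+ i.+1 * u ^+ (m - i))); last first.
  by move=> i _; rewrite /bump /= !add0n add1n subSS exprD mulrDr !mulrDl !mulrA.
rewrite mul1r big_split /= [LHS]addrC addrCA; congr (_ + _).
  by rewrite big_distrr /=; apply: eq_bigr => i _; rewrite exprMn exprS; ring.
rewrite big_distrr /= big_ord_recl /= qbinom0 !expr0 !mulr1 subn0.
rewrite [X in _ = _ + X]big_ord_recr /= qbinom_small // !mulr0 !mul0r addr0.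
rewrite mul1r -exprS; congr (_ + _); apply: eq_bigr => i _.
rewrite /bump /= !add0n add1n -(subnSK (ltn_ord i)) exprS exprMn !exprS /= exprD.
ring.
Qed.

Definition qfact p k := \prod_(l < k) (1 - p ^+ l.+1).

Lemma qfactS p k : qfact p k.+1 = qfact p k * (1 - p ^+ k.+1).
Proof. by rewrite /qfact big_ord_recr. Qed.

Lemma qbinom_qfact p m i : (i <= m)%N ->
  qbinom p m i * qfact p i * qfact p (m - i) = qfact p m.
Proof.
elim: m i => [|m IHm] [|i] //= im.
- by rewrite /qfact !big_ord0 !mulr1.
- by rewrite subn0 /qfact big_ord0 !mul1r.
rewrite subSS mulrDl mulrDl qfactS.
have low : qbinom p m i * (qfact p i * (1 - p ^+ i.+1)) * qfact p (m - i) =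
    qfact p m * (1 - p ^+ i.+1) by rewrite -(IHm i) //; ring.
have [mi | im' | eim] := ltngtP i m; last first.
- by rewrite -eim in low *; rewrite (@qbinom_small p i i.+1) // mulr0 !mul0r addr0 low qfactS.
- by move: im; rewrite ltnNge im'.
rewrite low -[in qfact p (m - i)](subnSK mi) qfactS (subnSK mi).
have -> : p ^+ i.+1 * qbinom p m i.+1 * (qfact p i * (1 - p ^+ i.+1)) *
    (qfact p (m - i.+1) * (1 - p ^+ (m - i))) =
    p ^+ i.+1 * (1 - p ^+ (m - i)) * (qbinom p m i.+1 * qfact p i.+1 * qfact p (m - i.+1)).
  by rewrite qfactS; ring.
rewrite IHm // qfactS.
have -> : m.+1 = (i.+1 + (m - i))%N by rewrite addSn subnKC // ltnW.
by rewrite exprD; ring.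
Qed.

End QBinomial.

Lemma prodr_exp_tri (R : comNzRingType) (x : R) a n :
  \prod_(k < n) x ^+ (a * k) = x ^+ (a * tri n).
Proof. by elim: n => [|n IHn]; rewrite ?big_ord0 ?muln0 // big_ord_recr /= IHn -exprD mulnDr. Qed.

Lemma sum_center (V : nmodType) (h : nat -> V) n :
  \sum_(i < (2 * n).+1) h i = h n + \sum_(k < n) (h (n + k.+1)%N + h (n - k.+1)%N).
Proof.
rewrite mul2n -addnn -addnS big_split_ord /= big_ord_recl /= addn0 big_split /= addrC -addrA.
by rewrite -(big_mkord xpredT h) big_rev_mkord subn0 [X in h n + X]addrC.
Qed.

Section FiniteJacobi.
Variables (R : comNzRingType) (s c n : nat).
Let b := (s + c)%N.
Let t := (s + 2 * c)%N.
Let p : {poly R} := 'X^(2 * b).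
Let shift := (s * n + b * (n * n.-1) + 2 * b * n * n)%N.
Let jexp i := (b * (i * i.-1) + s * i + 2 * b * n * (2 * n - i))%N.

(* Rothe's formula for prod_(k < 2n) (X^(2bn) - X^s X^(2bk)); the factor X^shift absorbs the
   negative powers of the two-sided product. *)
Lemma jacobi_finite_shifted :
  ((-1) ^+ n * 'X^shift) * (qpoch s (2 * b) n * qpoch t (2 * b) n) =
  \sum_(i < (2 * n).+1) (-1) ^+ i * 'X^(jexp i) * qbinom p (2 * n) i.
Proof.
have -> : \sum_(i < (2 * n).+1) (-1) ^+ i * 'X^(jexp i) * qbinom p (2 * n) i =
    \sum_(i < (2 * n).+1)
      p ^+ tri i * qbinom p (2 * n) i * (- 'X^s) ^+ i * 'X^(2 * b * n) ^+ (2 * n - i).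
  apply: eq_bigr => i _; rewrite /p -!exprM [(- 'X^s) ^+ i]exprNn -exprM /jexp.
  have -> : (2 * b * tri i = b * (i * i.-1))%N by rewrite -triE; ring.
  by rewrite !exprD; ring.
rewrite -qbinom_rothe (mul2n n) -addnn big_split_ord /=.
have upper : \prod_(k < n) ('X^(2 * b * n) + - 'X^s * p ^+ (n + k)) =
    'X^(2 * b * n * n) * qpoch s (2 * b) n.
  rewrite /qpoch (eq_bigr (fun k : 'I_n => 'X^(2 * b * n) * (1 - 'X^(s + 2 * b * k)))).
    by rewrite big_split /= prodr_const card_ord -exprM.
  move=> k _; rewrite /p -exprM mulrBr mulr1 mulNr -!exprD.
  by congr (_ - 'X^_); ring.
have lower : \prod_(k < n) ('X^(2 * b * n) + - 'X^s * p ^+ k) =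
    (-1) ^+ n * 'X^(s * n) * 'X^(b * (n * n.-1)) * qpoch t (2 * b) n.
  have -> : qpoch t (2 * b) n = \prod_(k < n) (1 - 'X^(t + 2 * b * (n - k.+1))) :> {poly R}.
    by rewrite /qpoch -(big_mkord xpredT (fun k => 1 - 'X^(t + 2 * b * k))) big_rev_mkord subn0.
  rewrite (eq_bigr (fun k : 'I_n =>
      - 'X^s * 'X^(2 * b * k) * (1 - 'X^(t + 2 * b * (n - k.+1))))).
    rewrite !big_split /= prodr_const card_ord prodr_exp_tri [(- 'X^s) ^+ n]exprNn -exprM.
    by have -> : (2 * b * tri n = b * (n * n.-1))%N by rewrite -triE; ring.
  move=> k _; rewrite /p -exprM mulrBr mulr1 mulNr -!exprD mulNr opprK -exprD addrC.
  by congr (_ + 'X^_); have := ltn_ord k; rewrite /t /b; nia.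
by rewrite lower upper /shift !exprD; ring.
Qed.

Let jexp_center : jexp n = shift.
Proof. by rewrite /jexp /shift; nia. Qed.

Let jexp_above k : (k < n)%N -> jexp (n + k.+1) = (shift + (s * k.+1 ^ 2 + c * k.+1 * k))%N.
Proof.
move=> kn; rewrite /jexp /shift /b.
have [r ->] : exists r, n = (k.+1 + r)%N by exists (n - k.+1)%N; rewrite subnKC.
have -> : (2 * (k.+1 + r) - (k.+1 + r + k.+1) = r)%N by lia.
have -> : ((k.+1 + r + k.+1).-1 = k.+1 + r + k)%N by lia.
have -> : ((k.+1 + r).-1 = k + r)%N by lia.
ring.
Qed.

Let jexp_below k : (k < n)%N -> jexp (n - k.+1) = (shift + ((s + c) * k.+1 ^ 2 + c * k.+1))%N.
Proof.
move=> kn; rewrite /jexp /shift /b.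
have [r ->] : exists r, n = (k.+1 + r)%N by exists (n - k.+1)%N; rewrite subnKC.
rewrite addKn.
have -> : (2 * (k.+1 + r) - r = k.+1 + k.+1 + r)%N by lia.
have -> : ((k.+1 + r).-1 = k + r)%N by lia.
by case: r => [|r] /=; ring.
Qed.

Lemma jacobi_finite :
  let E := qpoch (2 * b) (2 * b) n : {poly R} in
  qpoch s (2 * b) n * qpoch t (2 * b) n * E =
  qbinom p (2 * n) n * E +
  \sum_(k < n) (-1) ^+ k.+1 *
     ('X^(s * k.+1 ^ 2 + c * k.+1 * k) * (qbinom p (2 * n) (n + k.+1) * E) +
      'X^((s + c) * k.+1 ^ 2 + c * k.+1) * (qbinom p (2 * n) (n - k.+1) * E)).
Proof.
move=> E; apply: (monic_lreg (monicXn R shift)).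
transitivity ((-1) ^+ n * E *
    ((-1) ^+ n * 'X^shift * (qpoch s (2 * b) n * qpoch t (2 * b) n))).
  by rewrite -[LHS](signrMK n); move: ((-1 : {poly R}) ^+ n) => sn; ring.
rewrite jacobi_finite_shifted big_distrr /= (sum_center (fun i =>
  (-1) ^+ n * E * ((-1) ^+ i * 'X^(jexp i) * qbinom p (2 * n) i))) mulrDr jexp_center.
congr (_ + _).
  by rewrite -[RHS](signrMK n); move: ((-1 : {poly R}) ^+ n) => sn; ring.
rewrite big_distrr /=; apply: eq_bigr => -[k kn] _ /=.
rewrite jexp_above // jexp_below // !(exprD _ shift).
have above : (-1 : {poly R}) ^+ n * (-1) ^+ (n + k.+1) = (-1) ^+ k.+1.
  by rewrite exprD signrMK.
have below : (-1 : {poly R}) ^+ n * (-1) ^+ (n - k.+1) = (-1) ^+ k.+1.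
  by rewrite -{1}(subnK kn) exprD mulrAC -expr2 sqrr_sign mul1r.
move: ((-1 : {poly R}) ^+ n) ((-1 : {poly R}) ^+ (n + k.+1)) ((-1 : {poly R}) ^+ (n - k.+1))
  above below => sn sa sb above below.
transitivity (sn * sa * ('X^shift * 'X^(s * k.+1 ^ 2 + c * k.+1 * k) *
      qbinom p (2 * n) (n + k.+1) * E) +
    sn * sb * ('X^shift * 'X^((s + c) * k.+1 ^ 2 + c * k.+1) *
      qbinom p (2 * n) (n - k.+1) * E)); first by ring.
by rewrite above below; ring.
Qed.

End FiniteJacobi.

Lemma qfactX (R : comNzRingType) e k : qfact ('X^e : {poly R}) k = qpoch e e k.
Proof. by apply: eq_bigr => l _; rewrite -exprM mulnS. Qed.

Lemma qbinom_center_trunc N b n i : (0 < b)%N ->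
  (N <= n)%N -> (N <= i)%N -> (N <= 2 * n - i)%N -> (i <= 2 * n)%N ->
  eq_upto N (qbinom ('X^b : {poly int}) (2 * n) i * qpoch b b n) 1.
Proof.
move=> b0 Nn Ni Nni ni.
(* [2n, i] (q^b;q^b)_i (q^b;q^b)_(2n-i) = (q^b;q^b)_2n, and all three products agree with
   (q^b;q^b)_n up to degree N *)
have fact := qbinom_qfact ('X^b : {poly int}) ni; rewrite !qfactX in fact.
have trunc L : (N <= L)%N -> eq_upto N (qpoch b b L : {poly int}) (qpoch b b n).
  by move=> NL; apply: qpoch_trunc.
have Qn : eq_upto N (qbinom ('X^b : {poly int}) (2 * n) i * qpoch b b n * qpoch b b n)
    (qpoch b b n).
  transitivity (qbinom ('X^b : {poly int}) (2 * n) i * qpoch b b i * qpoch b b (2 * n - i)).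
    by rewrite (trunc _ Ni) (trunc _ Nni); reflexivity.
  by rewrite fact; apply: trunc; lia.
rewrite -[X in eq_upto _ X _]mulr1 -(@qpochVK N b b n b0) mulrA Qn; reflexivity.
Qed.

(* sum_(|j| <= n) (-1)^j q^(s j^2 + c j (j - 1)), the terms j = k+1 and j = -(k+1) grouped *)
Definition theta (R : nzRingType) (s c n : nat) : {poly R} :=
  1 + \sum_(k < n) (-1) ^+ k.+1 *
      ('X^(s * k.+1 ^ 2 + c * k.+1 * k) + 'X^((s + c) * k.+1 ^ 2 + c * k.+1)).
Arguments theta {R} s c n.

Lemma jacobi_trunc N s c n : (0 < s)%N -> (2 * N + 2 <= n)%N ->
  eq_upto N (qpoch s (2 * (s + c)) n * qpoch (s + 2 * c) (2 * (s + c)) n *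
             qpoch (2 * (s + c)) (2 * (s + c)) n) (theta s c n : {poly int}).
Proof.
move=> s0 Nn; have b0 : (0 < 2 * (s + c))%N by rewrite muln_gt0 addn_gt0 s0.
rewrite jacobi_finite /theta; apply: eq_upto_add_Proper.
  by apply: qbinom_center_trunc => //; lia.
apply: eq_upto_sum => k _; apply: eq_upto_mul_Proper; first by reflexivity.
by apply: eq_upto_add_Proper; apply: eq_upto_XnM1 => Nd;
  apply: qbinom_center_trunc => //; nia.
Qed.

Section Dissection.
Context {R : comNzRingType}.

Lemma thetaS s c n : theta s c n.+1 = theta s c n + (-1) ^+ n.+1 *
  ('X^(s * n.+1 ^ 2 + c * n.+1 * n) + 'X^((s + c) * n.+1 ^ 2 + c * n.+1)) :> {poly R}.
Proof. by rewrite /theta big_ord_recr addrA. Qed.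

Lemma theta_dissect3 m :
  theta 1 0 (3 * m).+1 = theta 9 0 m - 'X *+ 2 * theta 3 6 m :> {poly R}.
Proof.
elim: m => [|m IHm].
  by rewrite /theta !big_ord0 big_ord1 /= expr1 !addr0 -mulr_natl; ring.
rewrite mulnS !addSn add0n; do 3 rewrite [theta 1 0 _]thetaS.
rewrite IHm !thetaS.
(* the pairs j = +-(3m+2), +-(3m+3), +-(3m+4) give the terms of index m.+1 of
   q theta 3 6, theta 9 0 and q theta 3 6 *)
have -> : (1 * (3 * m).+2 ^ 2 + 0 * (3 * m).+2 * (3 * m).+1 =
  1 + (3 * m.+1 ^ 2 + 6 * m.+1 * m))%N by ring.
have -> : (1 * (3 * m).+3 ^ 2 + 0 * (3 * m).+3 * (3 * m).+2 =
  9 * m.+1 ^ 2 + 0 * m.+1 * m)%N by ring.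
have -> : ((9 + 0) * m.+1 ^ 2 + 0 * m.+1 = 9 * m.+1 ^ 2 + 0 * m.+1 * m)%N by ring.
have -> : (1 * (3 * m).+4 ^ 2 + 0 * (3 * m).+4 * (3 * m).+3 =
  1 + ((3 + 6) * m.+1 ^ 2 + 6 * m.+1))%N by ring.
have sign j : (-1 : {poly R}) ^+ (3 * m + j) = (-1) ^+ m * (-1) ^+ j.
  by rewrite exprD -[(-1) ^+ (3 * m)]signr_odd oddM /= signr_odd.
rewrite -(addn4 (3 * m)) -(addn3 (3 * m)) -(addn2 (3 * m)) !sign !exprS.
move: ((-1 : {poly R}) ^+ m) => sg; ring.
Qed.

End Dissection.

Definition on_multiples (R : nzRingType) (d : nat) (p : {poly R}) :=
  forall k, ~~ (d %| k)%N -> p`_k = 0.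

Section OnMultiples.
Variables (R : nzRingType) (d : nat).
Implicit Types p q : {poly R}.

Lemma on_multiplesD p q : on_multiples d p -> on_multiples d q -> on_multiples d (p + q).
Proof. by move=> dp dq k dk; rewrite coefD dp ?dq ?addr0. Qed.

Lemma on_multiplesN p : on_multiples d p -> on_multiples d (- p).
Proof. by move=> dp k dk; rewrite coefN dp ?oppr0. Qed.

Lemma on_multiplesM p q : on_multiples d p -> on_multiples d q -> on_multiples d (p * q).
Proof.
move=> dp dq k dk; rewrite coefM; apply: big1 => -[j jk] _ /=.
have [dj | ?] := boolP (d %| j)%N; last by rewrite dp ?mul0r.
rewrite dq ?mulr0 //; apply: contra dk => dkj.
have jk' : (j <= k)%N by rewrite -ltnS.
by rewrite -(subnKC jk') dvdn_add.
Qed.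

Lemma on_multiplesXn e : (d %| e)%N -> on_multiples d ('X^e : {poly R}).
Proof. by move=> de k dk; rewrite coefXn; case: eqP => // ke; rewrite ke de in dk. Qed.

Lemma on_multiples1 : on_multiples d (1 : {poly R}).
Proof. by rewrite -(expr0 'X); apply: on_multiplesXn; rewrite dvdn0. Qed.

Lemma on_multiples_sign k : on_multiples d ((-1) ^+ k : {poly R}).
Proof.
elim: k => [|k IHk]; first exact: on_multiples1.
by rewrite exprS; apply: on_multiplesM => //; apply/on_multiplesN/on_multiples1.
Qed.

Lemma on_multiples_sum (I : Type) (r : seq I) (P : pred I) (F : I -> {poly R}) :
  (forall i, P i -> on_multiples d (F i)) -> on_multiples d (\sum_(i <- r | P i) F i).
Proof. by move=> dF k dk; rewrite coef_sum big1 // => i /dF ->. Qed.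

Lemma on_multiples_prod (I : Type) (r : seq I) (P : pred I) (F : I -> {poly R}) :
  (forall i, P i -> on_multiples d (F i)) -> on_multiples d (\prod_(i <- r | P i) F i).
Proof. by move=> dF; apply: big_ind => //; [exact: on_multiples1 | exact: on_multiplesM]. Qed.

Lemma on_multiples_theta s c n :
  (d %| s)%N -> (d %| c)%N -> on_multiples d (theta s c n : {poly R}).
Proof.
move=> ds dc; apply: on_multiplesD; first exact: on_multiples1.
apply: on_multiples_sum => k _; apply: on_multiplesM; first exact: on_multiples_sign.
have dsc : (d %| s + c)%N by apply: dvdn_add.
by apply: on_multiplesD; apply: on_multiplesXn; apply: dvdn_add;
  do ?[exact: dvdn_mulr | apply: dvdn_mulr].
Qed.

End OnMultiples.

Lemma on_multiples_qpochV d N a e L : (d %| a)%N -> (d %| e)%N -> on_multiples d (qpochV N a e L).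
Proof.
move=> da de; apply: on_multiples_prod => k _; apply: on_multiples_sum => j _.
by apply/on_multiplesXn/dvdn_mulr/dvdn_add => //; apply: dvdn_mulr.
Qed.

Definition positive_series (R : numDomainType) (p : {poly R}) :=
  (forall i, 0 <= p`_i) /\ 1 <= p`_0.

Section PositiveSeries.
Variable R : numDomainType.
Implicit Types p q : {poly R}.

Lemma positive_series1 : positive_series (1 : {poly R}).
Proof. by split=> [i|]; rewrite coefC //; case: i. Qed.

Lemma positive_seriesM p q :
  positive_series p -> positive_series q -> positive_series (p * q).
Proof.
move=> [p0 p1] [q0 q1]; split; last by rewrite coef0M mulr_ege1.
by move=> i; rewrite coefM sumr_ge0 // => j _; rewrite mulr_ge0.
Qed.

Lemma positive_series_prod (I : Type) (r : seq I) (P : pred I) (F : I -> {poly R}) :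
  (forall i, P i -> positive_series (F i)) -> positive_series (\prod_(i <- r | P i) F i).
Proof.
by move=> posF; apply: big_ind => //; [exact: positive_series1 | exact: positive_seriesM].
Qed.

Lemma coefM_ge1 p q k : (forall i, 0 <= p`_i) -> 1 <= p`_k -> positive_series q ->
  1 <= (p * q)`_k.
Proof.
move=> p0 pk [q0 q1]; rewrite coefM big_ord_recr /= subnn.
by rewrite ler_wpDl ?mulr_ege1 // sumr_ge0 // => i _; rewrite mulr_ge0.
Qed.

End PositiveSeries.

Lemma geomP_coef_ge1 e N j : (j <= N)%N -> 1 <= (geomP e N)`_(e * j).
Proof.
move=> jN; rewrite /geomP coef_sum (bigD1 (Ordinal (_ : j < N.+1)%N)) //= coefXn eqxx.
by rewrite lerDl sumr_ge0 // => i _; rewrite coefXn; case: eqP.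
Qed.

Lemma positive_series_geomP e N : positive_series (geomP e N).
Proof.
split; first by move=> i; rewrite coef_sum sumr_ge0 // => j _; rewrite coefXn; case: eqP.
by rewrite -(muln0 e) geomP_coef_ge1.
Qed.

Lemma positive_series_qpochV N a d L : positive_series (qpochV N a d L).
Proof. by apply: positive_series_prod => k _; apply: positive_series_geomP. Qed.

Lemma coef_geomPM_ge1 e N j q : (j <= N)%N -> positive_series q ->
  1 <= (geomP e N * q)`_(e * j).
Proof.
by move=> jN; apply: coefM_ge1 (geomP_coef_ge1 e jN); case: (positive_series_geomP e N).
Qed.

Lemma trunc_prodE N :
  trunc_prod N = qpoch 1 1 N ^+ 2 * qpochV N 2 2 N * qpochV N 3 3 N ^+ 2.
Proof.
rewrite /trunc_prod big_add1 /= big_mkord !big_split /=.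
have -> : \prod_(k < N) (1 - 'X^(k.+1)) = qpoch 1 1 N :> {poly int}.
  by apply: eq_bigr => k _; rewrite add1n mul1n.
have geomS e : \prod_(k < N) geomP (e * k.+1) N = qpochV N e e N.
  by apply: eq_bigr => k _; rewrite mulnS.
by rewrite !geomS !expr2 !mulrA.
Qed.

Lemma coef_qpochVM_ge1 N a d L j q : (0 < L)%N -> (j <= N)%N -> positive_series q ->
  1 <= (qpochV N a d L * q)`_(a * j).
Proof.
case: L => // L _ jN q_pos; rewrite qpochV_recl -mulrA coef_geomPM_ge1 //.
exact/positive_seriesM/q_pos/positive_series_qpochV.
Qed.

Definition theta_quotient (N s c : nat) : {poly int} :=
  theta s c (2 * N + 2) * qpochV N 3 3 N ^+ 2.

Section Quotients.
Variable N : nat.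
Let m := (2 * N + 2)%N.
Let G := qpochV N 3 3 N.
Let Nm : (N <= m)%N. Proof. by rewrite /m; lia. Qed.

Let qpoch33_G : eq_upto N (qpoch 3 3 N ^+ 2 * G ^+ 2) 1.
Proof. by rewrite -exprMn qpochVK // expr1n; reflexivity. Qed.

Lemma trunc_prod_theta : eq_upto N (trunc_prod N) (theta 1 0 (3 * m).+1 * G ^+ 2).
Proof.
set n := (3 * m).+1.
have nN : (2 * N + 2 <= n)%N by lia.
have jac : eq_upto N (qpoch 1 2 n * qpoch 1 2 n * qpoch 2 2 n) (theta 1 0 n) :=
  jacobi_trunc 0 (s := 1) isT nN.
have odd_even : eq_upto N (qpoch 1 1 N) (qpoch 1 2 n * qpoch 2 2 n : {poly int}).
  by rewrite (qpoch_split2 1 1 n); apply: qpoch_trunc => //; lia.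
have even_inv : eq_upto N (qpoch 2 2 n * qpochV N 2 2 N) 1.
  by rewrite (@qpoch_trunc _ N 2 2 n N) //; [exact: qpochVK | lia].
rewrite trunc_prodE odd_even -jac -[X in eq_upto _ _ X]mulr1 -even_inv.
by apply: eq_upto_eq; rewrite /G; ring.
Qed.

Lemma theta90_quotient : eq_upto N (theta_quotient N 9 0)
  (qpochV N 3 9 m ^+ 2 * qpochV N 6 9 m ^+ 2 * qpochV N 18 18 m).
Proof.
rewrite /theta_quotient -/m -/G.
apply: (@eq_upto_cancel _ N (qpoch 3 9 m ^+ 2 * qpoch 6 9 m ^+ 2 * qpoch 18 18 m)).
  have jac : eq_upto N (qpoch 9 18 m * qpoch 9 18 m * qpoch 18 18 m) (theta 9 0 m) :=
    jacobi_trunc 0 (s := 9) isT (leqnn m).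
  rewrite -jac -qpoch33_G.
  have -> : qpoch 3 9 m ^+ 2 * qpoch 6 9 m ^+ 2 * qpoch 18 18 m *
      (qpoch 9 18 m * qpoch 9 18 m * qpoch 18 18 m * G ^+ 2) =
      (qpoch 3 9 m * qpoch 6 9 m * (qpoch 9 18 m * qpoch 18 18 m)) ^+ 2 * G ^+ 2 by ring.
  rewrite (qpoch_split2 9 9 m) (@qpoch_trunc _ N 9 9 (2 * m) m) //; last by lia.
  by rewrite (qpoch_split3 3 3 m) (@qpoch_trunc _ N 3 3 (3 * m) N) //; lia.
transitivity ((qpoch 3 9 m * qpochV N 3 9 m) ^+ 2 * (qpoch 6 9 m * qpochV N 6 9 m) ^+ 2 *
  (qpoch 18 18 m * qpochV N 18 18 m)); first by apply: eq_upto_eq; ring.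
by rewrite !qpochVK // !expr1n !mulr1; reflexivity.
Qed.

Lemma theta36_quotient : eq_upto N (theta_quotient N 3 6)
  (qpochV N 3 3 m * qpochV N 6 18 m * qpochV N 9 18 m * qpochV N 12 18 m).
Proof.
rewrite /theta_quotient -/m -/G.
apply: (@eq_upto_cancel _ N (qpoch 3 3 m * qpoch 6 18 m * qpoch 9 18 m * qpoch 12 18 m)).
  have jac : eq_upto N (qpoch 3 18 m * qpoch 15 18 m * qpoch 18 18 m) (theta 3 6 m) :=
    jacobi_trunc 6 (s := 3) isT (leqnn m).
  rewrite -jac -qpoch33_G.
  have -> : qpoch 3 3 m * qpoch 6 18 m * qpoch 9 18 m * qpoch 12 18 m *
      (qpoch 3 18 m * qpoch 15 18 m * qpoch 18 18 m * G ^+ 2) =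
      qpoch 3 3 m * ((qpoch 3 18 m * qpoch 9 18 m * qpoch 15 18 m) *
        (qpoch 6 18 m * qpoch 12 18 m * qpoch 18 18 m)) * G ^+ 2 by ring.
  rewrite (qpoch_split3 3 6 m) (qpoch_split3 6 6 m) (qpoch_split2 3 3 (3 * m)).
  by rewrite (@qpoch_trunc _ N 3 3 m N) // (@qpoch_trunc _ N 3 3 (2 * (3 * m)) N) //; lia.
transitivity ((qpoch 3 3 m * qpochV N 3 3 m) * (qpoch 6 18 m * qpochV N 6 18 m) *
  (qpoch 9 18 m * qpochV N 9 18 m) * (qpoch 12 18 m * qpochV N 12 18 m)).
  by apply: eq_upto_eq; ring.
by rewrite !qpochVK // !mulr1; reflexivity.
Qed.

End Quotients.

Lemma coef_theta_quotient90_gt0 N k : (k <= N)%N -> (3 %| k)%N ->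
  0 < (theta_quotient N 9 0)`_k.
Proof.
move=> kN /dvdnP[j kE]; rewrite (theta90_quotient kN) kE (mulnC j).
rewrite expr2 -!mulrA; apply: (lt_le_trans ltr01); apply: coef_qpochVM_ge1.
- by rewrite addn2.
- by lia.
- by do !apply: positive_seriesM; apply: positive_series_qpochV.
Qed.

Lemma coef_theta_quotient36_gt0 N k : (k <= N)%N -> (3 %| k)%N ->
  0 < (theta_quotient N 3 6)`_k.
Proof.
move=> kN /dvdnP[j kE]; rewrite (theta36_quotient kN) kE (mulnC j) -!mulrA.
apply: (lt_le_trans ltr01); apply: coef_qpochVM_ge1.
- by rewrite addn2.
- by lia.
- by do !apply: positive_seriesM; apply: positive_series_qpochV.
Qed.

Lemma on_multiples3_theta_quotient N s c : (3 %| s)%N -> (3 %| c)%N ->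
  on_multiples 3 (theta_quotient N s c).
Proof.
move=> s3 c3; apply: on_multiplesM; first exact: on_multiples_theta.
by rewrite expr2; apply: on_multiplesM; apply: on_multiples_qpochV.
Qed.

Lemma a_theta_quotient n :
  a n = (theta_quotient n 9 0)`_n - ('X * theta_quotient n 3 6)`_n *+ 2.
Proof.
rewrite /a (trunc_prod_theta (leqnn n)) theta_dissect3 /theta_quotient.
by rewrite mulrBl -mulrA mulrnAl coefB coefMn.
Qed.

Theorem theorem1p3 (n : nat) :
  ((n %% 3 = 0)%N -> 0 < a n) /\
  ((n %% 3 = 1)%N -> a n < 0) /\
  ((n %% 3 = 2)%N -> a n = 0).
Proof.
have A3 : on_multiples 3 (theta_quotient n 9 0) by exact: on_multiples3_theta_quotient.
have B3 : on_multiples 3 (theta_quotient n 3 6) by exact: on_multiples3_theta_quotient.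
rewrite a_theta_quotient coefXM; split; [|split] => nmod.
- rewrite (_ : (if _ then _ else _) = 0) ?mul0rn ?subr0.
    by apply: coef_theta_quotient90_gt0; lia.
  by case: eqP => // n0; apply: B3; lia.
- have n0 : (n == 0)%N = false by apply/eqP; lia.
  rewrite A3 ?n0 ?sub0r ?oppr_lt0 ?pmulrn_lgt0 //; last by lia.
  by apply: coef_theta_quotient36_gt0; lia.
- have n0 : (n == 0)%N = false by apply/eqP; lia.
  by rewrite A3 ?n0 ?B3 ?mul0rn ?subr0 //; lia.
Qed.
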